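(* For every two-point selection $f$ on $\mathbb{R}$ there is a two-point selection $g$ on $\mathbb{R}$ that has neither a $g$-minimum point nor a $g$-maximum point, such that $\mathcal{B}_f(\mathbb{R})=\mathcal{B}_g(\mathbb{R})$.
   Context: A two-point selection on $\mathbb{R}$ is a function $f$ from the set of two-element subsets of $\mathbb{R}$ to $\mathbb{R}$ with $f(F)\in F$. A point $x$ is an $f$-minimum if $f(\{x,y\})=x$ for all $y\neq x$, and an $f$-maximum if $f(\{x,y\})=y$ for all $y\ne x$. Write $r<_f s$ if $f(\{r,s\})=r$, $(\leftarrow,r)_f=\{x: x<_f r\}$, $(r,\rightarrow)_f=\{x: r<_f x\}$. The topology $\tau_f$ on $\mathbb{R}$ is generated (as a subbase) by all these sets, and $\mathcal{B}_f(\mathbb{R})$ is the $\sigma$-algebra generated by $\tau_f$. *)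

From HB Require Import structures.
From mathcomp Require Import all_boot all_order all_algebra.
From mathcomp Require Import all_classical all_reals.
From mathcomp Require Import measure.
From Stdlib Require Import Reals.
Set Implicit Arguments. Unset Strict Implicit. Unset Printing Implicit Defensive.
Local Open Scope classical_set_scope.

Definition twoset : Type :=
  {A : set R | exists x y : R, x <> y /\ A = [set x; y]}.

Definition pair2 (r s : R) (h : r <> s) : twoset :=
  exist _ [set r; s] (ex_intro _ r (ex_intro _ s (conj h erefl))).

Definition two_point_selection (f : twoset -> R) : Prop :=
  forall F : twoset, proj1_sig F (f F).

Definition sel_lt (f : twoset -> R) (r s : R) : Prop :=
  exists h : r <> s, f (pair2 h) = r.

Definition is_f_minimum (f : twoset -> R) (x : R) : Prop :=
  forall (y : R) (h : x <> y), f (pair2 h) = x.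

Definition is_f_maximum (f : twoset -> R) (x : R) : Prop :=
  forall (y : R) (h : x <> y), f (pair2 h) = y.

Definition left_ray (f : twoset -> R) (r : R) : set R := [set x | sel_lt f x r].
Definition right_ray (f : twoset -> R) (r : R) : set R := [set x | sel_lt f r x].

Definition sel_subbase (f : twoset -> R) : set (set R) :=
  [set A | exists r, A = left_ray f r \/ A = right_ray f r].

Definition is_topology (T : set (set R)) : Prop :=
  [/\ T setT,
      (forall A B, T A -> T B -> T (A `&` B)) &
      (forall F : set (set R), F `<=` T -> T (\bigcup_(A in F) A))].

Definition tau_sel (f : twoset -> R) : set (set R) :=
  smallest is_topology (sel_subbase f).

Definition borel_sel (f : twoset -> R) : set (set R) :=
  <<s tau_sel f >>.

From mathcomp Require Import all_boot all_classical measure.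
From mathcomp Require Import Rstruct.
From Stdlib Require Import Reals Lra.
Set Implicit Arguments. Unset Strict Implicit. Unset Printing Implicit Defensive.
Local Open Scope classical_set_scope.

(* Idea: at most one point is an f-minimum and at most one an f-maximum; put
   them among three distinct points a, b, c and let g agree with f except that
   a <_g b <_g c <_g a.  The cycle leaves g without extremal points.  Changing
   a selection on the pairs inside a finite set S does not change the Borel sets:
   the two topologies have the same trace on the open set ~` S, and every subset
   of S is finite, hence Borel. *)

Lemma pair2_sym (x y : R) (h : x <> y) (h' : y <> x) : pair2 h = pair2 h'.
Proof. by apply: eq_sig_hprop => [? ? ?|]; [exact: Prop_irrelevance | exact: setUC]. Qed.

Section topology.
Variable T : set (set R).
Hypothesis T_top : is_topology T.

Lemma topology_setI A B : T A -> T B -> T (A `&` B).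
Proof. by case: T_top => _ TI _; exact: TI. Qed.

Lemma topology_setU A B : T A -> T B -> T (A `|` B).
Proof.
case: T_top => _ _ TU TA TB.
have -> : A `|` B = \bigcup_(X in [set A; B]) X by rewrite bigcup_setU !bigcup_set1.
by apply: TU => X [] ->.
Qed.

Lemma is_topology_trace C : T C -> is_topology [set U | T (U `&` C)].
Proof.
case: T_top => TT _ TU TC; split => /=.
- by rewrite setTI.
- by move=> A B TA TB; rewrite setIIl; exact: topology_setI.
- move=> F TF; rewrite setI_bigcupl -(bigcup_image F (setI^~ C) (@id (set R))).
  by apply: TU => _ [A FA <-]; exact: TF.
Qed.

End topology.

Lemma smallest_is_topology (G : set (set R)) : is_topology (smallest is_topology G).
Proof.
split.
- by move=> T [[]].
- move=> A B GA GB T [T_top GT].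
  by apply: topology_setI => //; [exact: GA | exact: GB].
- move=> F GF T [/[dup] T_top [_ _ TU] GT].
  by apply: TU => A /GF; apply.
Qed.

Lemma tau_sel_topology f : is_topology (tau_sel f).
Proof. exact: smallest_is_topology. Qed.

Lemma left_ray_setU_right_ray f x : two_point_selection f ->
  left_ray f x `|` right_ray f x = ~` [set x].
Proof.
move=> f_sel; apply/seteqP; split => y /=.
  by case=> -[h _] yx; apply: h.
move=> yx; have xy : x <> y by move=> e; apply: yx.
case: (f_sel (pair2 xy)) => /= fxy.
  by right; exists xy.
by left; exists yx; rewrite (pair2_sym yx xy).
Qed.

Lemma tau_sel_left_ray f r : tau_sel f (left_ray f r).
Proof. by apply: sub_gen_smallest; exists r; left. Qed.

Lemma tau_sel_right_ray f r : tau_sel f (right_ray f r).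
Proof. by apply: sub_gen_smallest; exists r; right. Qed.

Lemma tau_sel_setC1 f x : two_point_selection f -> tau_sel f (~` [set x]).
Proof.
move=> f_sel; rewrite -(left_ray_setU_right_ray x f_sel).
by apply: (topology_setU (tau_sel_topology f));
  [exact: tau_sel_left_ray | exact: tau_sel_right_ray].
Qed.

Lemma set_seq_cons (T : eqType) (x : T) (s : seq T) :
  [set` (x :: s)] = x |` [set` s].
Proof.
apply/predeqP => y /=; rewrite inE; split.
  by case/orP => [/eqP|]; [left | right].
by case=> [->|->]; rewrite ?eqxx ?orbT.
Qed.

Lemma tau_sel_setC_finite f S : two_point_selection f -> finite_set S ->
  tau_sel f (~` S).
Proof.
move=> f_sel /finite_seqP[s ->]; elim: s => [|x s IHs].
  by rewrite set_nil setC0; case: (tau_sel_topology f).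
rewrite set_seq_cons setCU.
by apply: (topology_setI (tau_sel_topology f)) IHs; exact: tau_sel_setC1.
Qed.

Lemma borel_sel_setU f A B : borel_sel f A -> borel_sel f B -> borel_sel f (A `|` B).
Proof.
move=> fA fB; rewrite -bigcup2E.
by apply: sigma_algebra_bigcup => -[|[|n]] //=; exact: sigma_algebra0.
Qed.

Lemma borel_sel_finite f A : two_point_selection f -> finite_set A ->
  borel_sel f A.
Proof.
move=> f_sel /finite_seqP[s ->]; elim: s => [|x s IHs].
  by rewrite set_nil; exact: sigma_algebra0.
rewrite set_seq_cons; apply: borel_sel_setU IHs.
rewrite -[[set x]]setCK -setTD; apply: sigma_algebraCD.
by apply: sub_sigma_algebra; exact: tau_sel_setC1.
Qed.

Definition agree_off (f g : twoset -> R) (S : set R) : Prop :=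
  forall x y (h : x <> y), ~ (S x /\ S y) -> f (pair2 h) = g (pair2 h).

Section agree_off.
Variables (f g : twoset -> R) (S : set R).
Hypothesis fg : agree_off f g S.

Lemma agree_offC : agree_off g f S.
Proof. by move=> x y h nS; rewrite fg. Qed.

Lemma left_ray_agree_off r : left_ray f r `&` ~` S = left_ray g r `&` ~` S.
Proof.
apply/seteqP; split => x /= [[h e] Sx]; split => //; exists h.
  by rewrite -fg // => -[].
by rewrite fg // => -[].
Qed.

Lemma right_ray_agree_off r : right_ray f r `&` ~` S = right_ray g r `&` ~` S.
Proof.
apply/seteqP; split => x /= [[h e] Sx]; split => //; exists h.
  by rewrite -fg // => -[].
by rewrite fg // => -[].
Qed.

Lemma is_f_minimum_agree_off x : ~ S x -> is_f_minimum g x -> is_f_minimum f x.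
Proof. by move=> Sx gx y h; rewrite fg; [exact: gx | case]. Qed.

Lemma is_f_maximum_agree_off x : ~ S x -> is_f_maximum g x -> is_f_maximum f x.
Proof. by move=> Sx gx y h; rewrite fg; [exact: gx | case]. Qed.

Hypotheses (g_sel : two_point_selection g) (S_fin : finite_set S).

Lemma tau_sel_setIC_agree_off U : tau_sel f U -> tau_sel g (U `&` ~` S).
Proof.
move: U; apply: smallest_sub.
  exact: (is_topology_trace (tau_sel_topology g) (tau_sel_setC_finite g_sel S_fin)).
move=> _ [r [->|->]] /=; [rewrite left_ray_agree_off | rewrite right_ray_agree_off];
  apply: (topology_setI (tau_sel_topology g));
  by [exact: tau_sel_left_ray | exact: tau_sel_right_ray | exact: tau_sel_setC_finite].
Qed.

Lemma borel_sel_sub_agree_off : borel_sel f `<=` borel_sel g.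
Proof.
apply: smallest_sub; first exact: smallest_sigma_algebra.
move=> U fU; rewrite -(setUIDK U S).
apply: borel_sel_setU.
  apply: borel_sel_finite => //.
  by apply: (sub_finite_set _ S_fin) => x [].
by apply: sub_sigma_algebra; exact: tau_sel_setIC_agree_off.
Qed.

End agree_off.

Lemma borel_sel_agree_off f g S : two_point_selection f -> two_point_selection g ->
  finite_set S -> agree_off f g S -> borel_sel f = borel_sel g.
Proof.
move=> f_sel g_sel S_fin fg; apply/seteqP; split.
  exact: (borel_sel_sub_agree_off fg g_sel S_fin).
exact: (borel_sel_sub_agree_off (agree_offC fg) f_sel S_fin).
Qed.

Lemma is_f_minimum_unique f x y : is_f_minimum f x -> is_f_minimum f y -> x = y.
Proof.
move=> fx fy; apply: contrapT => xy; have yx : y <> x by move=> e; apply: xy.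
by have := fx y xy; rewrite (pair2_sym xy yx) fy; exact: yx.
Qed.

Lemma is_f_maximum_unique f x y : is_f_maximum f x -> is_f_maximum f y -> x = y.
Proof.
move=> fx fy; apply: contrapT => xy; have yx : y <> x by move=> e; apply: xy.
by have := fx y xy; rewrite (pair2_sym xy yx) fy; exact: xy.
Qed.

Lemma extremal_candidates f : exists p q,
  (forall x, is_f_minimum f x -> x = p) /\ (forall x, is_f_maximum f x -> x = q).
Proof.
have [[p fp]|nmin] := pselect (exists p, is_f_minimum f p);
have [[q fq]|nmax] := pselect (exists q, is_f_maximum f q);
  [exists p, q | exists p, p | exists q, q | exists 0%R, 0%R];
  split => x fx; solve [exact: is_f_minimum_unique fx fp
                       | exact: is_f_maximum_unique fx fq
                       | by case: nmin; exists x | by case: nmax; exists x].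
Qed.

Lemma triangle_cover (p q : R) : exists a b c,
  [/\ a <> b, b <> c, c <> a, [set a; b; c] p & [set a; b; c] q].
Proof.
have [->|pq] := pselect (q = p).
  by exists p, (p + 1)%R, (p + 2)%R; split=> /=; try (move=> e; lra); left; left.
have p_le := Rle_abs p; have q_le := Rle_abs q.
have p_abs := Rabs_pos p; have q_abs := Rabs_pos q.
exists p, q, (Rabs p + Rabs q + 1)%R; split => /=.
- by move=> e; apply: pq.
- move=> e; lra.
- move=> e; lra.
- by left; left.
- by left; right.
Qed.

Lemma set2_subset (x y u v : R) : u <> v -> [set x; y] u -> [set x; y] v ->
  [set x; y] `<=` [set u; v].
Proof.
move=> uv [] xu [] yv z [] zx /=;
  first [by left; congruence | by right; congruence | congruence].
Qed.

(* On a two-element F, the test "a and b lie in F" means F = {a, b}; so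
   a <_g b, b <_g c, c <_g a, and g = f on every other pair. *)
Definition cycle_sel (f : twoset -> R) (a b c : R) (F : twoset) : R :=
  if `[< sval F a /\ sval F b >] then a
  else if `[< sval F b /\ sval F c >] then b
  else if `[< sval F c /\ sval F a >] then c
  else f F.

Lemma cycle_sel_selection f a b c : two_point_selection f ->
  two_point_selection (cycle_sel f a b c).
Proof.
move=> f_sel F; rewrite /cycle_sel.
case: asboolP => [[Fa _] //|_].
case: asboolP => [[Fb _] //|_].
case: asboolP => [[Fc _] //|_].
exact: f_sel.
Qed.

Section cycle_sel.
Variables (f : twoset -> R) (a b c : R).
Hypotheses (ab : a <> b) (bc : b <> c) (ca : c <> a).
Let g := cycle_sel f a b c.
Let S := [set a; b; c].

Lemma cycle_sel_agree_off : agree_off f g S.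
Proof.
move=> x y h nS.
have off u v : S u -> S v -> u <> v -> ~ ([set x; y] u /\ [set x; y] v).
  move=> Su Sv uv [xyu xyv]; apply: nS; have sub := set2_subset uv xyu xyv.
  by split; [case: (sub x (or_introl erefl)) | case: (sub y (or_intror erefl))] => ->.
have Sa : S a by left; left.
have Sb : S b by left; right.
have Sc : S c by right.
rewrite /g /cycle_sel /=.
case: asboolP => [/(off a b Sa Sb ab)[]|_] //.
case: asboolP => [/(off b c Sb Sc bc)[]|_] //.
by case: asboolP => [/(off c a Sc Sa ca)[]|_].
Qed.

Lemma cycle_sel_ab : g (pair2 ab) = a.
Proof. by rewrite /g /cycle_sel /=; case: asboolP => // -[]; split; [left|right]. Qed.

Lemma cycle_sel_bc : g (pair2 bc) = b.
Proof.
rewrite /g /cycle_sel /=; case: asboolP => [[[e|e] _]|_]; try congruence.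
by case: asboolP => // -[]; split; [left|right].
Qed.

Lemma cycle_sel_ca : g (pair2 ca) = c.
Proof.
rewrite /g /cycle_sel /=.
case: asboolP => [[_ [e|e]]|_]; try congruence.
case: asboolP => [[[e|e] _]|_]; try congruence.
by case: asboolP => // -[]; split; [left|right].
Qed.

Lemma cycle_sel_no_minimum x : S x -> ~ is_f_minimum g x.
Proof.
case=> [[->|->]|->] gx.
- by apply: ca; rewrite -cycle_sel_ca (pair2_sym ca (nesym ca)) gx.
- by apply: ab; rewrite -cycle_sel_ab (pair2_sym ab (nesym ab)) gx.
- by apply: bc; rewrite -cycle_sel_bc (pair2_sym bc (nesym bc)) gx.
Qed.

Lemma cycle_sel_no_maximum x : S x -> ~ is_f_maximum g x.
Proof.
case=> [[->|->]|->] gx.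
- by apply: ab; rewrite -[in LHS]cycle_sel_ab gx.
- by apply: bc; rewrite -[in LHS]cycle_sel_bc gx.
- by apply: ca; rewrite -[in LHS]cycle_sel_ca gx.
Qed.

End cycle_sel.

Theorem lemma2p2 (f : twoset -> R) :
  two_point_selection f ->
  exists g : twoset -> R,
    two_point_selection g /\
    (forall x : R, ~ is_f_minimum g x) /\
    (forall x : R, ~ is_f_maximum g x) /\
    borel_sel f = borel_sel g.
Proof.
move=> f_sel.
have [p [q [min_p max_q]]] := extremal_candidates f.
have [a [b [c [ab bc ca Sp Sq]]]] := triangle_cover p q.
have fg := cycle_sel_agree_off f ab bc ca.
exists (cycle_sel f a b c); split; first exact: cycle_sel_selection.
split; [|split].
- move=> x gx; have [Sx|nSx] := pselect ([set a; b; c] x).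
    exact: cycle_sel_no_minimum Sx gx.
  by apply: (nSx); rewrite (min_p x) //; exact: is_f_minimum_agree_off fg _ nSx gx.
- move=> x gx; have [Sx|nSx] := pselect ([set a; b; c] x).
    exact: cycle_sel_no_maximum Sx gx.
  by apply: (nSx); rewrite (max_q x) //; exact: is_f_maximum_agree_off fg _ nSx gx.
- exact: borel_sel_agree_off f_sel (cycle_sel_selection a b c f_sel)
    (finite_set3 a b c) fg.
Qed.
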